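(* For any consistent $\mathrm{k}$-step IEMS method with real coefficients $a_j$ ($0\le j\le\mathrm{k}-1$), $b_j$ ($0\le j\le\mathrm{k}$), $c_j$ ($0\le j\le\mathrm{k}-1$), the implicit-explicit controllability intensity satisfies $$\mathfrak{I}_{\mathrm{IE}}:=\frac{\min_{\theta\in[0,2\pi)}\Re\big[b(\theta)/a(\theta)\big]}{\max_{\theta\in[0,2\pi)}\big|c(\theta)/a(\theta)\big|}\le1,$$ and the value $1$ is achieved by the implicit-explicit Euler scheme ($\mathrm{k}=1$, $a_0=1$, $b_0=1$, $b_1=0$, $c_0=1$).
   Context: $a(\theta)=\sum_ja_je^{\imath j\theta}$, $b(\theta)=\sum_jb_je^{\imath j\theta}$, $c(\theta)=\sum_jc_je^{\imath j\theta}$ with $\imath=\sqrt{-1}$. The method is $\sum_{j=0}^{\mathrm{k}-1}a_j\partial_\tau u^{n-j}+\varpi\sum_{j=0}^{\mathrm{k}}b_j\mathcal{L}u^{n-j}=\sum_{j=0}^{\mathrm{k}-1}c_j\mathcal{F}(u^{n-j-1})$; consistency means $\sum_{j=0}^{\mathrm{k}-1}a_j=\sum_{j=0}^{\mathrm{k}}b_j=\sum_{j=0}^{\mathrm{k}-1}c_j=1$. The maximum and minimum are assumed to be finite, with the denominator positive. *)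

From HB Require Import structures.
From mathcomp Require Import all_boot all_order all_algebra.
From mathcomp Require Import complex.
From mathcomp Require Import all_classical all_reals all_analysis.
Set Implicit Arguments. Unset Strict Implicit. Unset Printing Implicit Defensive.
Import Order.TTheory GRing.Theory Num.Theory.
Local Open Scope ring_scope.
Local Open Scope complex_scope.

Definition expi (R : realType) (t : R) : R[i] := cos t +i* sin t.

Definition symb (R : realType) (n : nat) (p : 'I_n -> R) (theta : R) : R[i] :=
  \sum_(j < n) (p j)%:C * expi (j%:R * theta).

Definition is_min_on_circle (R : realType) (f : R -> R) (m : R) : Prop :=
  (exists2 t, 0 <= t < 2 * pi & f t = m) /\
  (forall t, 0 <= t < 2 * pi -> m <= f t).

Definition is_max_on_circle (R : realType) (f : R -> R) (M : R) : Prop :=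
  (exists2 t, 0 <= t < 2 * pi & f t = M) /\
  (forall t, 0 <= t < 2 * pi -> f t <= M).

Definition ReBA (R : realType) k (a : 'I_k -> R) (b : 'I_k.+1 -> R) (t : R) : R :=
  complex.Re (symb b t / symb a t).
Definition absCA (R : realType) k (a c : 'I_k -> R) (t : R) : R :=
  ComplexField.Normc.normc (symb c t / symb a t).

(* At theta = 0 every symbol equals the sum of its coefficients, i.e. 1 for a
   consistent method, so both Re(b/a) and |c/a| take the value 1 there.  Hence
   the minimum of the former is at most 1 and the maximum of the latter at
   least 1.  For the IMEX Euler scheme all three symbols are identically 1. *)

From HB Require Import structures.
From mathcomp Require Import all_boot all_order all_algebra.
From mathcomp Require Import complex.
From mathcomp Require Import all_classical all_reals all_analysis.
Set Implicit Arguments. Unset Strict Implicit. Unset Printing Implicit Defensive.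
Import Order.TTheory GRing.Theory Num.Theory.
Local Open Scope ring_scope.
Local Open Scope complex_scope.

Section CircleExtrema.
Variable R : realType.

Lemma zero_in_circle : (0 : R) <= 0 < 2 * @pi R.
Proof. by rewrite lexx mulr_gt0 ?pi_gt0. Qed.

Lemma is_min_on_circle_le0 (f : R -> R) m : is_min_on_circle f m -> m <= f 0.
Proof. by move=> [_ /(_ 0 zero_in_circle)]. Qed.

Lemma is_max_on_circle_ge0 (f : R -> R) M : is_max_on_circle f M -> f 0 <= M.
Proof. by move=> [_ /(_ 0 zero_in_circle)]. Qed.

Lemma is_min_on_circle_const (f : R -> R) x :
  (forall t, f t = x) -> is_min_on_circle f x.
Proof. by move=> fx; split=> [|t _]; [exists 0; [exact: zero_in_circle|]|]; rewrite fx. Qed.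

Lemma is_max_on_circle_const (f : R -> R) x :
  (forall t, f t = x) -> is_max_on_circle f x.
Proof. by move=> fx; split=> [|t _]; [exists 0; [exact: zero_in_circle|]|]; rewrite fx. Qed.

End CircleExtrema.

Section Symbols.
Variable R : realType.

Lemma expi0 : expi (0 : R) = 1.
Proof. by rewrite /expi cos0 sin0. Qed.

Lemma symb_at0 n (p : 'I_n -> R) : symb p 0 = (\sum_(j < n) p j)%:C.
Proof.
rewrite /symb rmorph_sum; apply: eq_bigr => j _.
by rewrite mulr0 expi0 mulr1.
Qed.

Lemma symb_supported_at0 n (p : 'I_n.+1 -> R) t :
  (forall j : 'I_n.+1, j != ord0 -> p j = 0) -> symb p t = (p ord0)%:C.
Proof.
move=> p0; rewrite /symb (bigD1 ord0) //= mul0r expi0 mulr1 big1 ?addr0 //.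
by move=> j /p0 ->; rewrite mul0r.
Qed.

Lemma ReBA_at0 k (a : 'I_k -> R) (b : 'I_k.+1 -> R) :
  \sum_(j < k) a j = 1 -> \sum_(j < k.+1) b j = 1 -> ReBA a b 0 = 1.
Proof. by move=> a1 b1; rewrite /ReBA !symb_at0 a1 b1 divr1. Qed.

Lemma absCA_at0 k (a c : 'I_k -> R) :
  \sum_(j < k) a j = 1 -> \sum_(j < k) c j = 1 -> absCA a c 0 = 1.
Proof.
by move=> a1 c1; rewrite /absCA !symb_at0 a1 c1 divr1 ComplexField.Normc.normc1.
Qed.

End Symbols.

Local Close Scope complex_scope.

Theorem corollary3p4 :
  (forall (R : realType) (k : nat) (a : 'I_k -> R) (b : 'I_k.+1 -> R)
          (c : 'I_k -> R) (m M : R),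
      (0 < k)%N ->
      \sum_(j < k) a j = 1 -> \sum_(j < k.+1) b j = 1 -> \sum_(j < k) c j = 1 ->
      (forall t, 0 <= t < 2 * pi -> symb a t != 0) ->
      is_min_on_circle (ReBA a b) m ->
      is_max_on_circle (absCA a c) M ->
      0 < M ->
      m / M <= 1)
  /\
  (forall (R : realType),
      let a : 'I_1 -> R := fun _ => 1 in
      let b : 'I_2 -> R := fun j => if val j == 0%N then 1 else 0 in
      let c : 'I_1 -> R := fun _ => 1 in
      exists m M : R,
        [/\ is_min_on_circle (ReBA a b) m,
            is_max_on_circle (absCA a c) M,
            0 < M & m / M = 1]).
Proof.
split.
  move=> R k a b c m M _ a1 b1 c1 _ /is_min_on_circle_le0 + /is_max_on_circle_ge0.
  rewrite ReBA_at0 // absCA_at0 // => m_le1 M_ge1 M_gt0.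
  by rewrite ler_pdivrMr // mul1r (le_trans m_le1 M_ge1).
move=> R a b c.
have symb1 (p : 'I_1 -> R) t : p ord0 = 1 -> symb p t = 1.
  by move=> p1; rewrite symb_supported_at0 ?p1 // => j; rewrite ord1 eqxx.
have symb_b t : symb b t = 1 by rewrite symb_supported_at0 // => -[[|[]]].
exists 1, 1; split; rewrite ?ltr01 ?divr1 //.
- by apply: is_min_on_circle_const => t; rewrite /ReBA symb_b symb1 // divr1.
- apply: is_max_on_circle_const => t.
  by rewrite /absCA !symb1 // divr1 ComplexField.Normc.normc1.
Qed.
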